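(* For every $n\ge 9$, the graph $G_n$ is not an IP-SEG graph.
   Context: Let $L_1$ and $L_2$ be two distinct parallel horizontal lines in the plane. A closed straight line segment is an interval segment if both of its endpoints lie on the same line $L_i$, and a permutation segment if one endpoint lies on $L_1$ and the other on $L_2$. An IP-SEG model is a finite family of interval and permutation segments; its intersection graph has one vertex per segment, adjacent iff the segments intersect. A graph is an IP-SEG graph if it is isomorphic to the intersection graph of an IP-SEG model. For $n\ge 3$, $G_n$ is the graph on $3n$ vertices $v_1,\dots,v_n,w_1,\dots,w_n,z_1,\dots,z_n$ whose edges are $v_iv_{i+1}$ (indices mod $n$), $v_iw_i$ and $w_iz_i$ for $1\le i\le n$, and no others. *)

From Stdlib Require Import Reals List.
Open Scope R_scope.

Definition point := (R * R)%type.
Definition segment := (point * point)%type.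

Definition on_hline (c : R) (p : point) : Prop := snd p = c.

Definition in_segment (p : point) (s : segment) : Prop :=
  exists t : R, 0 <= t <= 1 /\
    fst p = (1 - t) * fst (fst s) + t * fst (snd s) /\
    snd p = (1 - t) * snd (fst s) + t * snd (snd s).

Definition segments_intersect (s1 s2 : segment) : Prop :=
  exists p : point, in_segment p s1 /\ in_segment p s2.

(* L1 : y = y1, L2 : y = y2. *)
Definition interval_segment (y1 y2 : R) (s : segment) : Prop :=
  fst s <> snd s /\
  ((on_hline y1 (fst s) /\ on_hline y1 (snd s)) \/
   (on_hline y2 (fst s) /\ on_hline y2 (snd s))).

Definition permutation_segment (y1 y2 : R) (s : segment) : Prop :=
  (on_hline y1 (fst s) /\ on_hline y2 (snd s)) \/
  (on_hline y2 (fst s) /\ on_hline y1 (snd s)).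

Definition IP_SEG_model (y1 y2 : R) (M : list segment) : Prop :=
  Forall (fun s => interval_segment y1 y2 s \/ permutation_segment y1 y2 s) M.

Definition default_segment : segment := ((0, 0), (0, 0)).

Definition ig_vertex (M : list segment) : Type := { k : nat | (k < length M)%nat }.

Definition ig_adj (M : list segment) (u v : ig_vertex M) : Prop :=
  proj1_sig u <> proj1_sig v /\
  segments_intersect (nth (proj1_sig u) M default_segment)
                     (nth (proj1_sig v) M default_segment).

Definition graph_iso (V W : Type) (adjV : V -> V -> Prop) (adjW : W -> W -> Prop) : Prop :=
  exists (f : V -> W) (g : W -> V),
    (forall x, g (f x) = x) /\ (forall y, f (g y) = y) /\
    (forall u v, adjV u v <-> adjW (f u) (f v)).

Definition IP_SEG_graph (y1 y2 : R) (V : Type) (adj : V -> V -> Prop) : Prop :=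
  exists M : list segment, IP_SEG_model y1 y2 M /\ graph_iso V (ig_vertex M) adj (ig_adj M).

(* The graph G_n: vertices v_i, w_i, z_i for i = 0..n-1 (0-indexed). *)
Inductive vkind := KV | KW | KZ.

Definition Gn_vertex (n : nat) : Type := { p : vkind * nat | (snd p < n)%nat }.

Definition Gn_adj_raw (n : nat) (a b : vkind * nat) : Prop :=
  let (k, i) := a in let (l, j) := b in
  (k = KV /\ l = KV /\ (j = Nat.modulo (S i) n \/ i = Nat.modulo (S j) n)) \/
  (k = KV /\ l = KW /\ i = j) \/ (k = KW /\ l = KV /\ i = j) \/
  (k = KW /\ l = KZ /\ i = j) \/ (k = KZ /\ l = KW /\ i = j).

Definition Gn_adj (n : nat) (u v : Gn_vertex n) : Prop :=
  Gn_adj_raw n (proj1_sig u) (proj1_sig v).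

(* Every interval or permutation segment between the lines y = y1 and
   y = y2 is described by a [code]: an x-interval on one of the two lines,
   or a pair (a, b) of x-coordinates for a segment from (a, y1) to (b, y2).
   Intersection of segments becomes the purely order-theoretic relation
   [meets] on codes, so a model of G_n yields codes c(k, i) whose
   [meets]-graph is G_n ([represents]).

   A permutation code w splits the codes it does not meet into those lying
   to its left and to its right, and a path of codes avoiding w stays on
   one side.  Two consequences for the cycle v_0 ... v_(n-1) of G_n:
   - among three consecutive cycle vertices one is a permutation segment:
     otherwise the pendant path v_(k+2) w_(k+2) z_(k+2) forces w_(k+2) to
     be a permutation segment separating v_(k+1) from v_(k+3), although the
     rest of the cycle joins them while avoiding w_(k+2);
   - a permutation vertex v_j sees all of v_(j+2), ..., v_(j-2) on one
     side, its orientation; two permutation vertices at cyclic distance at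
     least 2 have opposite orientations.
   Finally, for n >= 9 the first fact yields three permutation vertices at
   pairwise cyclic distance at least 2, and two orientations cannot be
   pairwise opposite on three vertices. *)

From Stdlib Require Import Reals List Lra Lia Psatz Classical Arith.
Open Scope R_scope.

Inductive code : Type :=
  | Perm (a b : R)   (* the segment from (a, y1) to (b, y2) *)
  | Int1 (l r : R)   (* the segment from (l, y1) to (r, y1) *)
  | Int2 (l r : R).  (* the segment from (l, y2) to (r, y2) *)

Definition wf (c : code) : Prop :=
  match c with Perm _ _ => True | Int1 l r | Int2 l r => l <= r end.

Definition isPerm (c : code) : Prop := exists a b, c = Perm a b.

Definition points (y1 y2 : R) (c : code) (p : point) : Prop :=
  match c with
  | Perm a b => exists t, 0 <= t <= 1 /\
                  fst p = a + t * (b - a) /\ snd p = y1 + t * (y2 - y1)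
  | Int1 l r => snd p = y1 /\ l <= fst p <= r
  | Int2 l r => snd p = y2 /\ l <= fst p <= r
  end.

Definition meets (c d : code) : Prop :=
  match c, d with
  | Perm a b, Perm a' b' => ~ (a < a' /\ b < b') /\ ~ (a' < a /\ b' < b)
  | Perm a _, Int1 l r | Int1 l r, Perm a _ => l <= a <= r
  | Perm _ b, Int2 l r | Int2 l r, Perm _ b => l <= b <= r
  | Int1 l r, Int1 l' r' | Int2 l r, Int2 l' r' => l <= r' /\ l' <= r
  | _, _ => False
  end.

Lemma meets_sym (c d : code) : meets c d <-> meets d c.
Proof. destruct c, d; simpl; tauto. Qed.

Lemma height_param_inj (y1 y2 t t' : R) :
  y1 <> y2 -> y1 + t * (y2 - y1) = y1 + t' * (y2 - y1) -> t = t'.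
Proof.
  intros Hy E. assert (Ht : (t - t') * (y2 - y1) = 0) by lra.
  destruct (Rmult_integral _ _ Ht); lra.
Qed.

(* Two permutation segments intersect iff their endpoints are not in the
   same strict order on both lines; they then cross where the horizontal
   gap (a - a') + t ((b - b') - (a - a')) vanishes. *)
Lemma perm_points_meet_iff (y1 y2 a b a' b' : R) : y1 <> y2 ->
  (exists p, points y1 y2 (Perm a b) p /\ points y1 y2 (Perm a' b') p)
  <-> meets (Perm a b) (Perm a' b').
Proof.
  intros Hy; simpl; split.
  - intros [p [[t [Ht [Hx Hh]]] [t' [Ht' [Hx' Hh']]]]].
    assert (t = t') by (apply (height_param_inj y1 y2); lra). subst t'.
    split; intros [H1 H2].
    + destruct (Rle_dec (b' - b) (a' - a)); nra.
    + destruct (Rle_dec (b - b') (a - a')); nra.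
  - intros [H1 H2].
    destruct (Req_dec (a - a') (b - b')) as [E|E].
    + exists (a, y1). split; exists 0; simpl; repeat split; lra.
    +
      set (t := (a - a') / ((a - a') - (b - b'))).
      assert (Ht : t * ((a - a') - (b - b')) = a - a') by (unfold t; field; lra).
      assert (Hb : 0 <= t <= 1).
      { destruct (Rlt_le_dec 0 ((a - a') - (b - b'))); split; nra. }
      exists (a + t * (b - a), y1 + t * (y2 - y1)).
      split; exists t; simpl; repeat split; lra.
Qed.

Lemma points_meet_iff (y1 y2 : R) (c d : code) : y1 <> y2 -> wf c -> wf d ->
  (exists p, points y1 y2 c p /\ points y1 y2 d p) <-> meets c d.
Proof.
  intros Hy.
  assert (PI1 : forall a b l r,
    (exists p, points y1 y2 (Perm a b) p /\ points y1 y2 (Int1 l r) p) <-> l <= a <= r).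
  { intros a b l r; simpl; split.
    - intros [p [[t [Ht [Hx Hh]]] [Hh' Hl]]].
      assert (t = 0) by (apply (height_param_inj y1 y2); lra). subst; lra.
    - intros H. exists (a, y1). split; [exists 0|]; simpl; repeat split; lra. }
  assert (PI2 : forall a b l r,
    (exists p, points y1 y2 (Perm a b) p /\ points y1 y2 (Int2 l r) p) <-> l <= b <= r).
  { intros a b l r; simpl; split.
    - intros [p [[t [Ht [Hx Hh]]] [Hh' Hl]]].
      assert (t = 1) by (apply (height_param_inj y1 y2); lra). subst; lra.
    - intros H. exists (b, y2). split; [exists 1|]; simpl; repeat split; lra. }
  assert (SW : forall c d, (exists p, points y1 y2 c p /\ points y1 y2 d p) <->
                           (exists p, points y1 y2 d p /\ points y1 y2 c p)).
  { intros; split; intros [p [A B]]; exists p; auto. }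
  intros Hc Hd; destruct c as [a b|l r|l r], d as [a' b'|l' r'|l' r'].
  - apply perm_points_meet_iff; auto.
  - apply PI1.
  - apply PI2.
  - rewrite SW, PI1; simpl; tauto.
  - simpl in *; split.
    + intros [p [[E1 H1] [E2 H2]]]; lra.
    + intros [H1 H2]. exists (Rmax l l', y1); simpl.
      unfold Rmax; destruct (Rle_dec l l'); repeat split; lra.
  - simpl; split; [intros [p [[E1 _] [E2 _]]]; lra | tauto].
  - rewrite SW, PI2; simpl; tauto.
  - simpl; split; [intros [p [[E1 _] [E2 _]]]; lra | tauto].
  - simpl in *; split.
    + intros [p [[E1 H1] [E2 H2]]]; lra.
    + intros [H1 H2]. exists (Rmax l l', y2); simpl.
      unfold Rmax; destruct (Rle_dec l l'); repeat split; lra.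
Qed.

Definition code_of (y1 : R) (s : segment) : code :=
  match s with ((x1, z1), (x2, z2)) =>
    if Req_dec_T z1 y1
    then (if Req_dec_T z2 y1 then Int1 (Rmin x1 x2) (Rmax x1 x2) else Perm x1 x2)
    else (if Req_dec_T z2 y1 then Perm x2 x1 else Int2 (Rmin x1 x2) (Rmax x1 x2))
  end.

Definition IP_segment (y1 y2 : R) (s : segment) : Prop :=
  interval_segment y1 y2 s \/ permutation_segment y1 y2 s.

Lemma convex_hull_interval (x1 x2 x : R) :
  (exists t, 0 <= t <= 1 /\ x = (1 - t) * x1 + t * x2) <->
  Rmin x1 x2 <= x <= Rmax x1 x2.
Proof.
  split.
  - intros [t [Ht E]]. unfold Rmin, Rmax; destruct (Rle_dec x1 x2); split; nra.
  - intros H. destruct (Req_dec x1 x2) as [E|E].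
    + subst. rewrite Rmin_left, Rmax_left in H by lra. exists 0; split; lra.
    + assert (Ht : (x - x1) / (x2 - x1) * (x2 - x1) = x - x1) by (field; lra).
      set (t := (x - x1) / (x2 - x1)) in *. exists t.
      unfold Rmin, Rmax in H; destruct (Rle_dec x1 x2); (split; [split|]); nra.
Qed.

Lemma code_of_spec (y1 y2 : R) (s : segment) : y1 <> y2 -> IP_segment y1 y2 s ->
  wf (code_of y1 s) /\ forall p, in_segment p s <-> points y1 y2 (code_of y1 s) p.
Proof.
  intros Hy Hs. destruct s as [[x1 z1] [x2 z2]].
  unfold IP_segment, interval_segment, permutation_segment, on_hline in Hs; simpl in Hs.
  assert (C : (z1 = y1 /\ z2 = y1) \/ (z1 = y2 /\ z2 = y2) \/
              (z1 = y1 /\ z2 = y2) \/ (z1 = y2 /\ z2 = y1)) by tauto.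
  assert (Hmm : Rmin x1 x2 <= Rmax x1 x2)
    by (apply Rle_trans with x1; [apply Rmin_l | apply Rmax_l]).
  unfold in_segment, code_of; simpl.
  destruct C as [[-> ->]|[[-> ->]|[[-> ->]|[-> ->]]]];
    repeat (destruct (Req_dec_T _ _); try congruence); split; simpl; auto;
    intros p.
  - rewrite <- convex_hull_interval. split.
    + intros [t [Ht [E1 E2]]]. split; [lra | exists t; split; [auto | lra]].
    + intros [E [t [Ht E1]]]. exists t; repeat split; lra.
  - rewrite <- convex_hull_interval. split.
    + intros [t [Ht [E1 E2]]]. split; [lra | exists t; split; [auto | lra]].
    + intros [E [t [Ht E1]]]. exists t; repeat split; lra.
  - split; intros [t [Ht [E1 E2]]]; exists t; repeat split; lra.
  - split; intros [t [Ht [E1 E2]]]; exists (1 - t); repeat split; lra.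
Qed.

Lemma segments_intersect_iff (y1 y2 : R) (s s' : segment) : y1 <> y2 ->
  IP_segment y1 y2 s -> IP_segment y1 y2 s' ->
  segments_intersect s s' <-> meets (code_of y1 s) (code_of y1 s').
Proof.
  intros Hy Hs Hs'.
  destruct (code_of_spec _ _ _ Hy Hs) as [W1 I1].
  destruct (code_of_spec _ _ _ Hy Hs') as [W2 I2].
  rewrite <- (points_meet_iff y1 y2) by auto. unfold segments_intersect.
  split; intros [p [A B]]; exists p; [rewrite <- I1, <- I2 | rewrite I1, I2]; auto.
Qed.

Definition represents (n : nat) (c : vkind -> nat -> code) : Prop :=
  (forall k i, (i < n)%nat -> wf (c k i)) /\
  (forall k i l j, (i < n)%nat -> (j < n)%nat -> (k, i) <> (l, j) ->
     (Gn_adj_raw n (k, i) (l, j) <-> meets (c k i) (c l j))).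

(* An IP-SEG model of G_n yields a representing family of codes (the codes
   chosen outside the index range n are irrelevant). *)
Lemma represents_of_IP_SEG (n : nat) (y1 y2 : R) : y1 <> y2 ->
  IP_SEG_graph y1 y2 (Gn_vertex n) (Gn_adj n) -> exists c, represents n c.
Proof.
  intros Hy [M [HM [f [g [Hgf [_ Hadj]]]]]].
  assert (HIP : forall x : ig_vertex M, IP_segment y1 y2 (nth (proj1_sig x) M default_segment)).
  { intros [k Hk]; simpl. unfold IP_SEG_model in HM. rewrite Forall_forall in HM.
    apply HM, nth_In; auto. }
  set (vtx := fun k i (H : (i < n)%nat) =>
                exist (fun p : vkind * nat => (snd p < n)%nat) (k, i) H).
  exists (fun k i => match lt_dec i n with
     | left H => code_of y1 (nth (proj1_sig (f (vtx k i H))) M default_segment)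
     | right _ => Perm 0 0 end).
  split.
  - intros k i Hi. destruct (lt_dec i n) as [H|H]; [|lia].
    apply (code_of_spec y1 y2); auto.
  - intros k i l j Hi Hj Hne.
    destruct (lt_dec i n) as [H1|H1]; [|lia]. destruct (lt_dec j n) as [H2|H2]; [|lia].
    rewrite <- (segments_intersect_iff y1 y2) by auto.
    change (Gn_adj_raw n (k, i) (l, j)) with (Gn_adj n (vtx k i H1) (vtx l j H2)).
    rewrite Hadj. unfold ig_adj. split; [tauto|]. intros HI; split; auto.
    (* distinct vertices of G_n go to distinct segment indices *)
    intros E. apply Hne.
    assert (Ef : f (vtx k i H1) = f (vtx l j H2)).
    { destruct (f (vtx k i H1)) as [x hx], (f (vtx l j H2)) as [y hy].
      simpl in E; subst y. f_equal. apply Peano_dec.le_unique. }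
    apply (f_equal g) in Ef. rewrite !Hgf in Ef.
    exact (f_equal (@proj1_sig _ _) Ef).
Qed.

Definition left_of (w c : code) : Prop :=
  match w, c with
  | Perm a b, Perm a' b' => a' < a /\ b' < b
  | Perm a _, Int1 _ r => r < a
  | Perm _ b, Int2 _ r => r < b
  | _, _ => False
  end.

Definition right_of (w c : code) : Prop :=
  match w, c with
  | Perm a b, Perm a' b' => a < a' /\ b < b'
  | Perm a _, Int1 l _ => a < l
  | Perm _ b, Int2 l _ => b < l
  | _, _ => False
  end.

Lemma side_dichotomy (w c : code) : isPerm w -> ~ meets w c -> left_of w c \/ right_of w c.
Proof.
  intros [a [b ->]] H. destruct c as [a' b'|l r|l r]; simpl in *.
  - apply not_and_or in H. destruct H as [H|H]; apply NNPP in H; tauto.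
  - lra.
  - lra.
Qed.

Lemma sides_separate (w c d : code) : left_of w c -> right_of w d -> ~ meets c d.
Proof. destruct w, c, d; simpl; intros; lra. Qed.

Lemma sides_exclusive (w c : code) : wf c -> left_of w c -> right_of w c -> False.
Proof. destruct w, c; simpl; intros; lra. Qed.

Lemma left_of_asym (w c : code) : left_of w c -> left_of c w -> False.
Proof. destruct w, c; simpl; intros; lra. Qed.

Lemma right_of_asym (w c : code) : right_of w c -> right_of c w -> False.
Proof. destruct w, c; simpl; intros; lra. Qed.

Lemma left_of_isPerm (w c : code) : left_of w c -> isPerm w.
Proof. destruct w; simpl; try tauto; intros; do 2 eexists; eauto. Qed.

Lemma side_along_path (w : code) (f : nat -> code) (m : nat) : isPerm w ->
  (forall e, (e < m)%nat -> meets (f e) (f (S e))) ->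
  (forall e, (e <= m)%nat -> ~ meets w (f e)) ->
  (left_of w (f 0%nat) -> left_of w (f m)) /\ (right_of w (f 0%nat) -> right_of w (f m)).
Proof.
  intros Hw. induction m as [|m IH]; intros Hpath Havoid; [tauto|].
  destruct IH as [IL IR].
  - intros e He; apply Hpath; lia.
  - intros e He; apply Havoid; lia.
  - assert (HM := Hpath m ltac:(lia)).
    destruct (side_dichotomy w (f (S m)) Hw (Havoid _ (le_n _))) as [D|D];
      split; intros H0; auto; exfalso.
    + eapply sides_separate; [apply D | apply IR; auto | rewrite meets_sym; apply HM].
    + eapply sides_separate; [apply IL; auto | apply D | apply HM].
Qed.

Lemma interval_overhang (t : code) (lu ru l r : R) : lu <= ru ->
  meets t (Int1 lu ru) -> ~ meets t (Int1 l r) ->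
  exists q, lu <= q <= ru /\ (q < l \/ r < q).
Proof.
  intros Hlu Hm Hn. destruct t as [a1 b1|l1 r1|l1 r1]; simpl in *; try contradiction.
  - exists a1. split; lra.
  - destruct (Rlt_le_dec r l1).
    + exists (Rmax lu l1). unfold Rmax; destruct (Rle_dec lu l1); split; lra.
    + exists (Rmin ru r1). unfold Rmin; destruct (Rle_dec ru r1); split; lra.
Qed.

Lemma separator_in_gap (lu ru lx rx l r : R) (w z : code) :
  lu < l -> l <= ru -> ru < lx -> lx <= r -> r < rx ->
  meets w (Int1 l r) -> ~ meets w (Int1 lu ru) -> ~ meets w (Int1 lx rx) ->
  meets z w -> ~ meets z (Int1 l r) ->
  left_of w (Int1 lu ru) /\ right_of w (Int1 lx rx).
Proof.
  intros Hl Hul Hgap Hxr Hr Hwv Hwu Hwx Hzw Hzv.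
  destruct w as [aw bw|lw rw|lw rw]; simpl in *; try contradiction.
  - lra.
  - (* an interval w would lie inside v, so z would meet v *)
    exfalso. assert (l <= lw /\ rw <= r) by lra.
    destruct z; simpl in *; lra.
Qed.

(* The configuration of [separator_of_interval_path] when v lies on L1:
   u and x are disjoint intervals on L1 overhanging v on opposite sides. *)
Lemma separator_Int1 (u x t1 t2 w z : code) (l r : R) :
  wf u -> wf x -> ~ isPerm u -> ~ isPerm x ->
  meets u (Int1 l r) -> meets x (Int1 l r) -> ~ meets u x ->
  meets t1 u -> ~ meets t1 (Int1 l r) -> meets t2 x -> ~ meets t2 (Int1 l r) ->
  meets w (Int1 l r) -> ~ meets w u -> ~ meets w x ->
  meets z w -> ~ meets z (Int1 l r) ->
  (left_of w u /\ right_of w x) \/ (right_of w u /\ left_of w x).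
Proof.
  intros Wu Wx Pu Px Huv Hxv Hux H1u H1v H2x H2v Hwv Hwu Hwx Hzw Hzv.
  destruct u as [? ?|lu ru|lu ru];
    [exfalso; apply Pu; do 2 eexists; eauto | | simpl in Huv; contradiction].
  destruct x as [? ?|lx rx|lx rx];
    [exfalso; apply Px; do 2 eexists; eauto | | simpl in Hxv; contradiction].
  simpl in Wu, Wx, Huv, Hxv, Hux.
  destruct (interval_overhang t1 lu ru l r Wu H1u H1v) as [q1 [Q1 Q1']].
  destruct (interval_overhang t2 lx rx l r Wx H2x H2v) as [q2 [Q2 Q2']].
  destruct (Rlt_le_dec ru lx) as [Hux'|Hxu].
  - left. apply (separator_in_gap lu ru lx rx l r w z); auto; destruct Q1', Q2'; lra.
  - assert (Hxu' : rx < lu) by lra.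
    destruct (separator_in_gap lx rx lu ru l r w z) as [A B]; auto;
      destruct Q1', Q2'; lra.
Qed.

(* Exchanging the two lines preserves all the relations above; it reduces
   intervals on L2 to intervals on L1. *)
Definition flip (c : code) : code :=
  match c with Perm a b => Perm b a | Int1 l r => Int2 l r | Int2 l r => Int1 l r end.

Lemma meets_flip (c d : code) : meets (flip c) (flip d) <-> meets c d.
Proof. destruct c, d; simpl; tauto. Qed.

Lemma wf_flip (c : code) : wf (flip c) <-> wf c.
Proof. destruct c; simpl; tauto. Qed.

Lemma isPerm_flip (c : code) : isPerm (flip c) <-> isPerm c.
Proof.
  unfold isPerm; destruct c; simpl; split; intros [p [q E]]; try discriminate;
    injection E; intros; subst; eauto.
Qed.

Lemma left_of_flip (w c : code) : left_of (flip w) (flip c) <-> left_of w c.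
Proof. destruct w, c; simpl; tauto. Qed.

Lemma right_of_flip (w c : code) : right_of (flip w) (flip c) <-> right_of w c.
Proof. destruct w, c; simpl; tauto. Qed.

Lemma separator_of_interval_path (u v x t1 t2 w z : code) :
  wf u -> wf v -> wf x -> ~ isPerm u -> ~ isPerm v -> ~ isPerm x ->
  meets u v -> meets x v -> ~ meets u x ->
  meets t1 u -> ~ meets t1 v -> meets t2 x -> ~ meets t2 v ->
  meets w v -> ~ meets w u -> ~ meets w x -> meets z w -> ~ meets z v ->
  (left_of w u /\ right_of w x) \/ (right_of w u /\ left_of w x).
Proof.
  intros Wu Wv Wx Pu Pv Px. destruct v as [a b|l r|l r].
  - exfalso; apply Pv; do 2 eexists; eauto.
  - apply separator_Int1; auto.
  - intros. rewrite <- !(left_of_flip w), <- !(right_of_flip w).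
    apply (separator_Int1 _ _ (flip t1) (flip t2) _ (flip z) l r);
      rewrite ?wf_flip, ?isPerm_flip; auto;
      change (Int1 l r) with (flip (Int2 l r)); rewrite ?meets_flip; auto.
Qed.

Lemma mod_add_period (n k : nat) : ((k + n) mod n = k mod n)%nat.
Proof. rewrite <- (Nat.mul_1_l n) at 1. apply Nat.Div0.mod_add. Qed.

Lemma mod_shift_neq (n k d : nat) : (1 <= d <= n - 1)%nat -> ((k + d) mod n <> k mod n)%nat.
Proof.
  intros Hd. rewrite <- Nat.Div0.add_mod_idemp_l.
  assert (Hr : (k mod n < n)%nat) by (apply Nat.mod_upper_bound; lia).
  destruct (lt_dec (k mod n + d) n).
  - rewrite Nat.mod_small; lia.
  - rewrite <- (Nat.sub_add n (k mod n + d)), mod_add_period, Nat.mod_small; lia.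
Qed.

Lemma mod_succ (n k : nat) : (S (k mod n) mod n = S k mod n)%nat.
Proof.
  rewrite <- (Nat.add_1_r (k mod n)), <- (Nat.add_1_r k). apply Nat.Div0.add_mod_idemp_l.
Qed.

Section Representation.

Variable n : nat.
Variable c : vkind -> nat -> code.
Hypothesis n_ge_9 : (9 <= n)%nat.
Hypothesis c_rep : represents n c.

Definition V (k : nat) : code := c KV (k mod n).
Definition W (k : nat) : code := c KW (k mod n).
Definition Z (k : nat) : code := c KZ (k mod n).

Lemma mod_lt (k : nat) : (k mod n < n)%nat.
Proof. apply Nat.mod_upper_bound; lia. Qed.

Lemma V_period (k : nat) : V (k + n) = V k.
Proof. unfold V. now rewrite mod_add_period. Qed.

Lemma wf_V (k : nat) : wf (V k).
Proof. apply (proj1 c_rep), mod_lt. Qed.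

Lemma rep_iff (k l : vkind) (i j : nat) : (k, i mod n) <> (l, j mod n) ->
  Gn_adj_raw n (k, i mod n) (l, j mod n) <-> meets (c k (i mod n)) (c l (j mod n)).
Proof. apply (proj2 c_rep); apply mod_lt. Qed.

Lemma cycle_next (k : nat) : meets (V k) (V (k + 1)).
Proof.
  unfold V. apply rep_iff.
  - intros E; injection E as E. symmetry in E. revert E. apply mod_shift_neq; lia.
  - simpl. left. rewrite mod_succ, Nat.add_1_r. tauto.
Qed.

Lemma cycle_far (k d : nat) : (2 <= d <= n - 2)%nat -> ~ meets (V k) (V (k + d)).
Proof.
  intros Hd. unfold V. rewrite <- rep_iff.
  - simpl. rewrite !mod_succ.
    intros [[_ [_ [E|E]]]|HH]; [ | | decompose [and or] HH; discriminate].
    + replace (k + d)%nat with (S k + (d - 1))%nat in E by lia.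
      revert E. apply mod_shift_neq; lia.
    + replace (S (k + d)) with (k + (d + 1))%nat in E by lia.
      symmetry in E. revert E. apply mod_shift_neq; lia.
  - intros E; injection E as E. symmetry in E. revert E. apply mod_shift_neq; lia.
Qed.

Lemma V_meets_W (k : nat) : meets (V k) (W k).
Proof. unfold V, W. apply rep_iff; [congruence | simpl; tauto]. Qed.

Lemma W_meets_Z (k : nat) : meets (W k) (Z k).
Proof. unfold W, Z. apply rep_iff; [congruence | simpl; tauto]. Qed.

Lemma W_misses_V (k d : nat) : (1 <= d <= n - 1)%nat -> ~ meets (W k) (V (k + d)).
Proof.
  intros Hd. unfold W, V. rewrite <- rep_iff; [|congruence].
  simpl. intros [H|[H|[[_ [_ E]]|H]]]; try (decompose [and or] H; discriminate).
  symmetry in E. revert E. apply mod_shift_neq; lia.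
Qed.

Lemma Z_misses_V (k m : nat) : ~ meets (Z k) (V m).
Proof.
  unfold Z, V. rewrite <- rep_iff; [|congruence].
  simpl. intuition congruence.
Qed.

Lemma side_along_cycle (w : code) (s m : nat) : isPerm w ->
  (forall e, (e <= m)%nat -> ~ meets w (V (s + e))) ->
  (left_of w (V s) -> left_of w (V (s + m))) /\ (right_of w (V s) -> right_of w (V (s + m))).
Proof.
  intros Hw Havoid. rewrite <- (Nat.add_0_r s) at 1 3.
  apply (side_along_path w (fun e => V (s + e))); auto.
  intros e _. rewrite <- Nat.add_1_r, Nat.add_assoc. apply cycle_next.
Qed.

(* If v_(k+1), v_(k+2), v_(k+3) were all intervals, w_(k+2) would separate
   v_(k+1) from v_(k+3), which are joined by the arc v_(k+3), ..., v_(k+1+n)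
   avoiding w_(k+2). *)
Lemma no_three_consecutive_intervals (k : nat) :
  ~ isPerm (V (k + 1)) -> ~ isPerm (V (k + 2)) -> ~ isPerm (V (k + 3)) -> False.
Proof.
  intros P1 P2 P3.
  assert (Huv : meets (V (k + 1)) (V (k + 2))).
  { replace (k + 2)%nat with (k + 1 + 1)%nat by lia. apply cycle_next. }
  assert (Hxv : meets (V (k + 3)) (V (k + 2))).
  { rewrite meets_sym. replace (k + 3)%nat with (k + 2 + 1)%nat by lia. apply cycle_next. }
  assert (Hux : ~ meets (V (k + 1)) (V (k + 3))).
  { replace (k + 3)%nat with (k + 1 + 2)%nat by lia. apply cycle_far; lia. }
  assert (Ht1u : meets (V k) (V (k + 1))) by apply cycle_next.
  assert (Ht1v : ~ meets (V k) (V (k + 2))) by (apply cycle_far; lia).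
  assert (Ht2x : meets (V (k + 4)) (V (k + 3))).
  { rewrite meets_sym. replace (k + 4)%nat with (k + 3 + 1)%nat by lia. apply cycle_next. }
  assert (Ht2v : ~ meets (V (k + 4)) (V (k + 2))).
  { rewrite meets_sym. replace (k + 4)%nat with (k + 2 + 2)%nat by lia. apply cycle_far; lia. }
  assert (Hwv : meets (W (k + 2)) (V (k + 2))) by (rewrite meets_sym; apply V_meets_W).
  assert (Hwu : ~ meets (W (k + 2)) (V (k + 1))).
  { rewrite <- V_period. replace (k + 1 + n)%nat with (k + 2 + (n - 1))%nat by lia.
    apply W_misses_V; lia. }
  assert (Hwx : ~ meets (W (k + 2)) (V (k + 3))).
  { replace (k + 3)%nat with (k + 2 + 1)%nat by lia. apply W_misses_V; lia. }
  assert (Hzw : meets (Z (k + 2)) (W (k + 2))) by (rewrite meets_sym; apply W_meets_Z).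
  assert (Harc : forall e, (e <= n - 2)%nat -> ~ meets (W (k + 2)) (V (k + 3 + e))).
  { intros e He. replace (k + 3 + e)%nat with (k + 2 + (1 + e))%nat by lia.
    apply W_misses_V; lia. }
  assert (Hend : V (k + 3 + (n - 2)) = V (k + 1)).
  { replace (k + 3 + (n - 2))%nat with (k + 1 + n)%nat by lia. apply V_period. }
  destruct (separator_of_interval_path (V (k + 1)) (V (k + 2)) (V (k + 3)) (V k)
              (V (k + 4)) (W (k + 2)) (Z (k + 2))) as [[A B]|[A B]];
    auto using wf_V, Z_misses_V.
  - destruct (side_along_cycle (W (k + 2)) (k + 3) (n - 2)) as [_ R];
      eauto using left_of_isPerm.
    rewrite Hend in R. exact (sides_exclusive _ _ (wf_V _) A (R B)).
  - destruct (side_along_cycle (W (k + 2)) (k + 3) (n - 2)) as [L _];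
      eauto using left_of_isPerm.
    rewrite Hend in L. exact (sides_exclusive _ _ (wf_V _) (L B) A).
Qed.

Lemma perm_in_every_window (k : nat) : exists m, (k < m <= k + 3)%nat /\ isPerm (V m).
Proof.
  destruct (classic (isPerm (V (k + 1)))) as [P|P1]; [exists (k + 1)%nat; split; auto; lia|].
  destruct (classic (isPerm (V (k + 2)))) as [P|P2]; [exists (k + 2)%nat; split; auto; lia|].
  destruct (classic (isPerm (V (k + 3)))) as [P|P3]; [exists (k + 3)%nat; split; auto; lia|].
  exfalso. exact (no_three_consecutive_intervals k P1 P2 P3).
Qed.

Definition orientation (j : nat) : Prop := left_of (V j) (V (j + 2)).

Lemma perm_sees_arc_on_one_side (j e : nat) : isPerm (V j) -> (e <= n - 4)%nat ->
  (orientation j -> left_of (V j) (V (j + 2 + e))) /\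
  (~ orientation j -> right_of (V j) (V (j + 2 + e))).
Proof.
  intros HP He. unfold orientation.
  destruct (side_along_cycle (V j) (j + 2) e HP) as [L R].
  { intros e' He'. rewrite <- Nat.add_assoc. apply cycle_far; lia. }
  split; auto. intros NL. apply R.
  destruct (side_dichotomy (V j) (V (j + 2)) HP) as [D|D]; auto.
  - apply cycle_far; lia.
  - contradiction.
Qed.

(* Each of two permutation vertices at cyclic distance >= 2 lies on the
   oriented side of the other, so their orientations differ. *)
Lemma orientations_differ (i j : nat) : (i + 2 <= j)%nat -> (j + 2 <= i + n)%nat ->
  isPerm (V i) -> isPerm (V j) -> ~ (orientation i <-> orientation j).
Proof.
  intros Hij Hji Pi Pj Heq.
  destruct (perm_sees_arc_on_one_side i (j - i - 2) Pi ltac:(lia)) as [Li Ri].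
  destruct (perm_sees_arc_on_one_side j (i + n - j - 2) Pj ltac:(lia)) as [Lj Rj].
  replace (i + 2 + (j - i - 2))%nat with j in Li, Ri by lia.
  replace (j + 2 + (i + n - j - 2))%nat with (i + n)%nat in Lj, Rj by lia.
  rewrite V_period in Lj, Rj.
  destruct (classic (orientation i)) as [O|O].
  - exact (left_of_asym _ _ (Li O) (Lj (proj1 Heq O))).
  - exact (right_of_asym _ _ (Ri O) (Rj (fun H => O (proj2 Heq H)))).
Qed.

End Representation.

Lemma far_apart_triple (n : nat) (P : nat -> Prop) : (9 <= n)%nat ->
  (forall k, exists m, (k < m <= k + 3)%nat /\ P m) ->
  exists i j k, P i /\ P j /\ P k /\
    (i + 2 <= j)%nat /\ (j + 2 <= k)%nat /\ (k + 2 <= i + n)%nat.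
Proof.
  intros Hn win.
  destruct (win 0%nat) as [a [Ha Pa]].
  destruct (win (a + 1)%nat) as [b [Hb Pb]].
  destruct (win (a + n - 5)%nat) as [c [Hc Pc]].
  destruct (le_lt_dec (b + 2) c) as [Hbc|Hbc].
  { exists a, b, c; repeat split; auto; lia. }
  (* only n = 9, b = a + 4, c = a + 5 remains *)
  destruct (win a) as [d [Hd Pd]].
  destruct (win (a + 5)%nat) as [e [He Pe]].
  destruct (le_lt_dec (a + 2) d) as [Hd2|Hd1].
  { exists a, d, c; repeat split; auto; lia. }
  destruct (le_lt_dec e (a + 7)) as [He7|He8].
  - exists a, b, e; repeat split; auto; lia.
  - exists d, b, e; repeat split; auto; lia.
Qed.

Theorem mainTheorem10 (n : nat) (y1 y2 : R) :
  (9 <= n)%nat -> y1 <> y2 -> ~ IP_SEG_graph y1 y2 (Gn_vertex n) (Gn_adj n).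
Proof.
  intros Hn Hy HG.
  destruct (represents_of_IP_SEG n y1 y2 Hy HG) as [c Hc].
  destruct (far_apart_triple n (fun k => isPerm (V n c k)) Hn (perm_in_every_window n c Hn Hc))
    as (i & j & k & Pi & Pj & Pk & Hij & Hjk & Hki).
  pose proof (orientations_differ n c Hn Hc i j ltac:(lia) ltac:(lia) Pi Pj).
  pose proof (orientations_differ n c Hn Hc j k ltac:(lia) ltac:(lia) Pj Pk).
  pose proof (orientations_differ n c Hn Hc i k ltac:(lia) ltac:(lia) Pi Pk).
  (* two orientations cannot be pairwise opposite on three vertices *)
  destruct (classic (orientation n c i)), (classic (orientation n c j)); tauto.
Qed.
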